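(* Let $n>2$ be an integer, $q\in\mathbb{C}^\times$ and $\beta=-q-q^{-1}$. Every word $c$ in the generators $\Omega,\Omega^{-1},e_0,\dots,e_{n-1}$ of the affine Temperley--Lieb algebra $\mathsf{aTL}_n(\beta)$ can be rewritten, using the defining relations, in one of the three following forms: (i) $c=\Omega^k$ for some $k\in\mathbb{Z}$ (with $\Omega^0=\mathbf{1}$); (ii) $c=w$, where $w$ is a word in the generators $e_j$ only; (iii) $c=\Omega\, w$, where $w$ is a word in the generators $e_j$ only.
   Context: For $n>2$, the affine Temperley--Lieb algebra $\mathsf{aTL}_n(\beta)$ is the unital associative $\mathbb{C}$-algebra generated by $\Omega,\Omega^{-1},e_0,\dots,e_{n-1}$ subject to the relations (indices taken modulo $n$): $e_j^2=\beta e_j$, $e_je_{j\pm1}e_j=e_j$, $e_ie_j=e_je_i$ for $|i-j|>1$, $\Omega e_j\Omega^{-1}=e_{j-1}$, $\Omega\Omega^{-1}=\Omega^{-1}\Omega=\mathbf{1}$, and $\Omega^2e_1=e_{n-1}e_{n-2}\cdots e_2e_1$. *)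

From HB Require Import structures.
From mathcomp Require Import all_boot all_order all_algebra.
From mathcomp Require Import complex.
From mathcomp Require Export reals.
Set Implicit Arguments. Unset Strict Implicit. Unset Printing Implicit Defensive.
Import Order.TTheory GRing.Theory Num.Theory.
Local Open Scope ring_scope.

Inductive gen (n : nat) : Type := Gom | Gominv | Ge of 'I_n.
Arguments Gom {n}. Arguments Gominv {n}.

Lemma npos_of_gt2 (n : nat) (Hn : (2 < n)%N) : (0 < n)%N.
Proof. exact: ltnW (ltnW Hn). Qed.

Definition Imod (n : nat) (Hn : (2 < n)%N) (k : nat) : 'I_n :=
  Ordinal (ltn_pmod k (npos_of_gt2 Hn)).

Section Eval.
Variables (C : fieldType) (A : algType C) (n : nat).
Variables (Om Omi : A) (e : 'I_n -> A).

Definition gen_eval (g : gen n) : A :=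
  match g with Gom => Om | Gominv => Omi | Ge j => e j end.

Definition word_eval (c : seq (gen n)) : A := \prod_(g <- c) gen_eval g.

Definition Ompow (k : int) : A :=
  match k with Posz m => Om ^+ m | Negz m => Omi ^+ m.+1 end.
End Eval.

Record aTL_rel (C : fieldType) (A : algType C) (n : nat) (Hn : (2 < n)%N)
  (beta : C) (Om Omi : A) (e : 'I_n -> A) : Prop := ATLRel {
  aTL_E := fun k : nat => e (Imod Hn k);
  aTL_sq : forall j : nat, aTL_E j * aTL_E j = beta *: aTL_E j;
  aTL_braid_up : forall j : nat, aTL_E j * aTL_E j.+1 * aTL_E j = aTL_E j;
  aTL_braid_down : forall j : nat,
    aTL_E j.+1 * aTL_E j * aTL_E j.+1 = aTL_E j.+1;
  aTL_comm : forall i j : 'I_n, i != j -> Imod Hn i.+1 != j ->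
    Imod Hn j.+1 != i -> e i * e j = e j * e i;
  aTL_conj : forall j : nat, Om * aTL_E j.+1 * Omi = aTL_E j;
  aTL_invr : Om * Omi = 1;
  aTL_invl : Omi * Om = 1;
  aTL_twist : Om ^+ 2 * aTL_E 1 = \prod_(j <- rev (iota 1 n.-1)) aTL_E j
}.

From HB Require Import structures.
From mathcomp Require Import all_boot all_order all_algebra.
From mathcomp Require Import complex.
From mathcomp Require Import reals.
From mathcomp Require Import zify.
Import Order.TTheory GRing.Theory Num.Theory.
Local Open Scope ring_scope.

(* Let W+ be the set of nonempty words in the e_j.  The twist relation gives
   Omega^2 e_1 = e_(n-1) ... e_1, and since e_(n-1) ... e_1 e_2 ... e_(n-1) = e_(n-1) by the
   braid relations, also Omega^-2 e_(n-1) = e_1 ... e_(n-1).  Conjugation by Omega shifts the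
   indices of a word, so Omega^2 e_k and Omega^-2 e_k lie in W+ for every k, and Omega^2 and
   Omega^-2 map W+ into itself.  Hence W+ ∪ Omega W+ is stable under left multiplication by
   Omega, Omega^-1 and every e_j, while e_j Omega^k = Omega^k e_(j+k) moves an e_j across a
   power of Omega; induction on the word shows that every word is a power of Omega or lies
   in W+ ∪ Omega W+. *)

Section Reduction.
Set Implicit Arguments.
Variables (C : fieldType) (A : algType C) (n : nat) (Hn : (2 < n)%N).
Variables (beta : C) (Om Omi : A) (e : 'I_n -> A).
Hypothesis rel : aTL_rel Hn beta Om Omi e.

Local Notation E k := (e (Imod Hn k)).
Local Notation eprod w := (\prod_(j <- w) e j).

Definition is_neword (x : A) : Prop :=
  exists (i : 'I_n) (w : seq 'I_n), x = e i * eprod w.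

Definition eword_coset (x : A) : Prop := is_neword x \/ is_neword (Omi * x).

Definition reduced (x : A) : Prop :=
  (exists k : int, x = Ompow Om Omi k) \/ eword_coset x.

Lemma Imod_ord (j : 'I_n) : Imod Hn j = j.
Proof. by apply: val_inj; rewrite /= modn_small. Qed.

Lemma Imod_addMn k m : Imod Hn (k + m * n) = Imod Hn k.
Proof. by apply: val_inj; rewrite /= addnC modnMDl. Qed.

Lemma comm_Om_Omi : GRing.comm Om Omi.
Proof. by rewrite /GRing.comm (aTL_invr rel) (aTL_invl rel). Qed.

(* The record states its relations through the let-bound field aTL_E, which rewrite does
   not unfold; restate the three that are used in terms of E. *)
Lemma Om_E_Omi k : Om * E k.+1 * Omi = E k.
Proof. exact: aTL_conj rel k. Qed.

Lemma Om2_E1 : Om ^+ 2 * E 1 = \prod_(k <- rev (iota 1 n.-1)) E k.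
Proof. exact: aTL_twist rel. Qed.

Lemma E_braid_down k : E k.+1 * E k * E k.+1 = E k.+1.
Proof. exact: aTL_braid_down rel k. Qed.

Lemma Omi_E_Om k : Omi * E k * Om = E k.+1.
Proof.
by rewrite -(Om_E_Omi k) !mulrA (aTL_invl rel) mul1r -mulrA (aTL_invl rel) mulr1.
Qed.

Lemma E_Om k : E k * Om = Om * E k.+1.
Proof. by rewrite -(Om_E_Omi k) -!mulrA (aTL_invl rel) mulr1. Qed.

Lemma E_Omi k : E k.+1 * Omi = Omi * E k.
Proof. by rewrite -(Om_E_Omi k) !mulrA (aTL_invl rel) mul1r. Qed.

Lemma conj_eprod w : Omi * eprod w * Om = eprod [seq Imod Hn j.+1 | j : 'I_n <- w].
Proof.
elim: w => [|i w IH]; first by rewrite !big_nil mulr1 (aTL_invl rel).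
rewrite /= !big_cons -IH -(Omi_E_Om i) Imod_ord.
by rewrite !mulrA -[Omi * e i * Om * Omi]mulrA (aTL_invr rel) mulr1.
Qed.

Lemma neword_conj x : is_neword x -> is_neword (Omi * x * Om).
Proof.
case=> i [w ->]; exists (Imod Hn i.+1), [seq Imod Hn j.+1 | j : 'I_n <- w].
rewrite -conj_eprod -(Omi_E_Om i) Imod_ord !mulrA.
by rewrite -[Omi * e i * Om * Omi]mulrA (aTL_invr rel) mulr1.
Qed.

Lemma neword_mulr x w : is_neword x -> is_neword (x * eprod w).
Proof. by case=> i [w' ->]; exists i, (w' ++ w); rewrite big_cat mulrA. Qed.

Lemma neword_Eprod (s : seq nat) : s != [::] -> is_neword (\prod_(k <- s) E k).
Proof.
by case: s => // k s _; exists (Imod Hn k), (map (Imod Hn) s); rewrite big_map big_cons.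
Qed.

Lemma neword_mulE_shift (X : A) k0 :
  GRing.comm X Om -> is_neword (X * E k0) -> forall k, is_neword (X * E k).
Proof.
move=> cXOm hk0 k.
have cXOmi : GRing.comm X Omi.
  rewrite /GRing.comm -[X * Omi]mul1r -(aTL_invl rel) !mulrA -(mulrA Omi Om X) -cXOm.
  by rewrite !mulrA -mulrA (aTL_invr rel) mulr1.
have neword_from_k0 m : is_neword (X * E (k0 + m)).
  elim: m => [|m IH]; first by rewrite addn0.
  rewrite addnS -Omi_E_Om !mulrA cXOmi -(mulrA Omi X).
  exact: neword_conj.
have -> : Imod Hn k = Imod Hn (k0 + (k + k0 * n.-1)).
  by rewrite addnCA [(k0 + _)%N]addnC -mulnSr prednK ?(ltnW (ltnW Hn)) // Imod_addMn.
exact: neword_from_k0.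
Qed.

Lemma neword_mulE j y : is_neword y -> is_neword (e j * y).
Proof. by case=> i [w ->]; exists j, (i :: w); rewrite big_cons. Qed.

Lemma neword_mull (X : A) :
  (forall k, is_neword (X * E k)) -> forall x, is_neword x -> is_neword (X * x).
Proof.
move=> hX _ [i [w ->]].
by rewrite mulrA -(Imod_ord i); apply: neword_mulr.
Qed.

Lemma neword_Om2E k : is_neword (Om ^+ 2 * E k).
Proof.
apply: (@neword_mulE_shift _ 1); first exact/commr_sym/commrX.
rewrite Om2_E1; apply: neword_Eprod.
by rewrite -size_eq0 size_rev size_iota; lia.
Qed.

Lemma Edesc_Easc m :
  \prod_(k <- rev (iota 1 m.+1)) E k * \prod_(k <- iota 2 m) E k = E m.+1.
Proof.
elim: m => [|m IH]; first by rewrite /= big_seq1 big_nil mulr1.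
have -> : iota 1 m.+2 = iota 1 m.+1 ++ [:: m.+2] by rewrite -[m.+2]addn1 iotaD add1n addn1.
have -> : iota 2 m.+1 = iota 2 m ++ [:: m.+2] by rewrite -{1}[m.+1]addn1 iotaD add2n.
rewrite rev_cat !big_cat /= !big_seq1.
by rewrite mulrA -[E m.+2 * _ * _]mulrA IH E_braid_down.
Qed.

Lemma neword_Omi2E k : is_neword (Omi ^+ 2 * E k).
Proof.
apply: (@neword_mulE_shift _ n.-1); first exact/commr_sym/commrX/comm_Om_Omi.
have n1E : n.-1 = (n.-2).+1 by case: n Hn => [|[|]].
have Omi2Om2 : Omi ^+ 2 * Om ^+ 2 = 1.
  by rewrite -exprMn_comm ?(aTL_invl rel) ?expr1n //; apply/commr_sym/comm_Om_Omi.
rewrite n1E -Edesc_Easc -n1E -Om2_E1 mulrA (mulrA (Omi ^+ 2)) Omi2Om2 mul1r.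
by exists (Imod Hn 1), (map (Imod Hn) (iota 2 n.-2)); rewrite big_map.
Qed.

Lemma coset_Om x : eword_coset x -> eword_coset (Om * x).
Proof.
case=> hx; first by right; rewrite mulrA (aTL_invl rel) mul1r.
left; rewrite -[x]mul1r -(aTL_invr rel) !mulrA -expr2 -mulrA.
exact: neword_mull neword_Om2E _ hx.
Qed.

Lemma coset_Omi x : eword_coset x -> eword_coset (Omi * x).
Proof.
case=> hx; last by left.
by right; rewrite mulrA -expr2; apply: neword_mull neword_Omi2E _ hx.
Qed.

Lemma coset_e j x : eword_coset x -> eword_coset (e j * x).
Proof.
case=> hx; first by left; apply: neword_mulE.
right; have -> : Omi * (e j * x) = E j.+1 * (Omi * x).
  by rewrite -Omi_E_Om Imod_ord -!mulrA (mulrA Om) (aTL_invr rel) mul1r.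
exact: neword_mulE.
Qed.

Lemma coset_Ompow k x : eword_coset x -> eword_coset (Ompow Om Omi k * x).
Proof.
case: k => m /= hx.
  by elim: m => [|m IH]; rewrite ?expr0 ?mul1r // exprS -mulrA; apply: coset_Om.
elim: m => [|m IH]; first by rewrite expr1; apply: coset_Omi.
by rewrite exprS -mulrA; apply: coset_Omi.
Qed.

Lemma e_mul_exprC (X : A) :
  (forall j, exists j', e j * X = X * e j') ->
  forall m j, exists j', e j * X ^+ m = X ^+ m * e j'.
Proof.
move=> hX; elim=> [|m IH] j; first by exists j; rewrite !expr0 mul1r mulr1.
have [j1 h1] := hX j; have [j2 h2] := IH j1.
by exists j2; rewrite exprS mulrA h1 -mulrA h2 mulrA.
Qed.

Lemma e_Ompow j k : exists j', e j * Ompow Om Omi k = Ompow Om Omi k * e j'.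
Proof.
case: k => m /=; apply: e_mul_exprC => {}j.
  by exists (Imod Hn j.+1); rewrite -E_Om Imod_ord.
exists (Imod Hn (j + n.-1)); rewrite -E_Omi -addnS prednK ?(ltnW (ltnW Hn)) //.
have -> : (j + n = j + 1 * n)%N by rewrite mul1n.
by rewrite Imod_addMn Imod_ord.
Qed.

Lemma Om_Ompow k : Om * Ompow Om Omi k = Ompow Om Omi (k + 1).
Proof.
case: k => [m|[|m]].
- have -> : Posz m + 1 = Posz m.+1 by lia.
  by rewrite /= exprS.
- by rewrite /= expr1 (aTL_invr rel).
- have -> : Negz m.+1 + 1 = Negz m by lia.
  by rewrite /= exprS mulrA (aTL_invr rel) mul1r.
Qed.

Lemma Omi_Ompow k : Omi * Ompow Om Omi k = Ompow Om Omi (k - 1).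
Proof.
case: k => [[|m]|m].
- have -> : Posz 0 - 1 = Negz 0 by lia.
  by rewrite /= expr0 mulr1 expr1.
- have -> : Posz m.+1 - 1 = Posz m by lia.
  by rewrite /= exprS mulrA (aTL_invl rel) mul1r.
- have -> : Negz m - 1 = Negz m.+1 by lia.
  by rewrite /= -exprS.
Qed.

Lemma reduced_mull g x : reduced x -> reduced (gen_eval Om Omi e g * x).
Proof.
case: g => [||j] /= [[k ->]|hx].
- by left; exists (k + 1); rewrite Om_Ompow.
- by right; apply: coset_Om.
- by left; exists (k - 1); rewrite Omi_Ompow.
- by right; apply: coset_Omi.
- have [j' ->] := e_Ompow j k.
  right; apply: coset_Ompow; left.
  by exists j', [::]; rewrite big_nil mulr1.
- by right; apply: coset_e.
Qed.

Lemma reduced_word_eval c : reduced (word_eval Om Omi e c).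
Proof.
elim: c => [|g c IH]; first by left; exists 0; rewrite /word_eval big_nil.
by rewrite /word_eval big_cons; apply: reduced_mull.
Qed.

Lemma reduced_normal_form x : reduced x ->
  (exists k : int, x = Ompow Om Omi k)
  \/ (exists w : seq 'I_n, x = eprod w)
  \/ (exists w : seq 'I_n, x = Om * eprod w).
Proof.
case=> [hk|[[i [w ->]]|[i [w hx]]]]; [by left | right; left | right; right].
  by exists (i :: w); rewrite big_cons.
by exists (i :: w); rewrite big_cons -hx mulrA (aTL_invr rel) mul1r.
Qed.

End Reduction.

Theorem proposition2p1 (R : realType) (n : nat) (Hn : (2 < n)%N)
  (q : R[i]) (hq : q != 0)
  (A : algType R[i]) (Om Omi : A) (e : 'I_n -> A) :
  aTL_rel Hn (- q - q^-1) Om Omi e ->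
  forall c : seq (gen n),
    (exists k : int, word_eval Om Omi e c = Ompow Om Omi k)
    \/ (exists w : seq 'I_n, word_eval Om Omi e c = \prod_(j <- w) e j)
    \/ (exists w : seq 'I_n, word_eval Om Omi e c = Om * \prod_(j <- w) e j).
Proof.
move=> rel c.
by have := reduced_normal_form rel (reduced_word_eval rel c).
Qed.
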